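(* Let $n\ge2$, $m\ge2$ be integers, let $\mathcal{V}=\mathcal{V}_1\otimes\dots\otimes\mathcal{V}_m$ be a tensor product of vector spaces over a field $\mathbb{F}$, and let $\{x_a : a\in[n]\}$ be a multiset of product tensors with $x_a=x_{a,1}\otimes\dots\otimes x_{a,m}$. For $S\subseteq[n]$ and $j\in[m]$ let $d_j^S=\dim\operatorname{span}\{x_{a,j}:a\in S\}$. If for every subset $S \subseteq [n]$ with $2\leq |S| \leq n$ it holds that $|S| \leq\sum_{j=1}^m (d_j^S-1)$, then the set of product tensors lying in $\operatorname{span}\{x_a : a \in [n]\}$ equals $\mathbb{F}^\times x_1 \sqcup \dots \sqcup \mathbb{F}^\times x_n$ (i.e., every product tensor in this span is a non-zero scalar multiple of some $x_a$).
   Context: $[n]=\{1,\dots,n\}$. A product tensor is a non-zero tensor $z_1\otimes\dots\otimes z_m$, $z_j\in\mathcal{V}_j$. $\mathbb{F}^\times$ denotes the non-zero scalars. *)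

From HB Require Import structures.
From mathcomp Require Import all_boot all_order all_algebra.
Set Implicit Arguments. Unset Strict Implicit. Unset Printing Implicit Defensive.
Import GRing.Theory.
Local Open Scope ring_scope.

(* The tensor product V_1 (x) ... (x) V_m of V_j = F^(d j) (row vectors)
   is modelled in coordinates: a tensor is a function on multi-indices
   i = (i_1,...,i_m), i_j < d j. *)
Notation multi_index d := {dffun forall j, 'I_(d j)}.

Notation tensor F d := {ffun multi_index d -> F^o}.

Definition ptensor (F : fieldType) (m : nat) (d : 'I_m -> nat)
  (z : forall j : 'I_m, 'rV[F]_(d j)) : tensor F d :=
  [ffun i : multi_index d => (\prod_(j < m) z j 0 (i j) : F^o)].

Definition is_product_tensor (F : fieldType) (m : nat) (d : 'I_m -> nat)
  (t : tensor F d) : Prop :=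
  t != 0 /\ exists z : forall j : 'I_m, 'rV[F]_(d j), t = ptensor z.

Definition in_span (F : fieldType) (m n : nat) (d : 'I_m -> nat)
  (y : 'I_n -> tensor F d) (t : tensor F d) : Prop :=
  exists c : 'I_n -> F, t = \sum_(a < n) c a *: y a.

Definition dimS (F : fieldType) (m n : nat) (d : 'I_m -> nat)
  (x : 'I_n -> forall j : 'I_m, 'rV[F]_(d j)) (S : {set 'I_n}) (j : 'I_m) : nat :=
  \dim <<[seq x a j | a in S]>>%VS.

From HB Require Import structures.
From mathcomp Require Import all_boot all_order all_algebra.
From mathcomp Require Import zify.
Set Implicit Arguments. Unset Strict Implicit. Unset Printing Implicit Defensive.
Import GRing.Theory.
Local Open Scope ring_scope.

(* Call a family of vectors connected when no proper nonempty subfamily S1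
   splits its span as the direct sum of the spans of S1 and of its complement.
   The key bound is that a connected family S of product tensors spans a space
   of dimension greater than sum_j (d_j^S - 1).  For one flattening this says
   that a connected family of rank-one matrices u_a^T w_a spans at least
   dim span{u_a} + dim span{w_a} - 1 dimensions; it is proved by building a
   partition into blocks whose spans form a direct sum and which each satisfy
   the bound, blocks being merged by a Sylvester-type rank inequality for sums
   of matrices.  Replacing the factors one at a time by the all-ones vector
   gives the bound for product tensors.  Every linearly dependent family has a
   connected dependent subfamily, so a linear relation among product tensors
   yields an S with |S| >= sum_j (d_j^S - 1) + 2.  Under the hypothesis, for
   the x_a together with a product tensor t of their span, such an S can only
   consist of t and one x_a, whose factors are then all proportional. *)

Lemma setU1_ind (T : finType) (P : {set T} -> Prop) :
  P set0 -> (forall (a : T) (S : {set T}), a \notin S -> P S -> P (a |: S)) ->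
  forall S, P S.
Proof.
move=> P0 PU1 S; have [k] := ubnP #|S|; elim: k S => // k IH S ltSk.
have [-> // | [a aS]] := set_0Vmem S.
rewrite -(setD1K aS); apply: PU1; first by rewrite !inE eqxx.
by apply: IH; rewrite (cardsD1 a S) aS in ltSk.
Qed.

Section RankInequalities.
Variable F : fieldType.

(* With K the left kernel of A + B, K *m A = - K *m B lies in A :&: B, and
   K :&: kermx A annihilates row_mx A B, of rank \rank A + \rank B - \rank (A^T :&: B^T). *)
Lemma mxrank_addmx_caps p q (A B : 'M[F]_(p, q)) :
  (\rank A + \rank B <= \rank (A + B)%R + \rank (A :&: B)%MS + \rank (A^T :&: B^T)%MS)%N.
Proof.
set K := kermx (A + B).
have KAB : K *m A = - (K *m B).
  by apply/eqP; rewrite -addr_eq0 -mulmxDr; apply/eqP/sub_kermxP.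
have KA_sub : (K *m A <= A :&: B)%MS.
  by rewrite sub_capmx submxMl KAB -scaleN1r scalemx_sub ?submxMl.
have KkerA_sub : (K :&: kermx A <= kermx (row_mx A B))%MS.
  apply/sub_kermxP; rewrite mul_mx_row.
  have /sub_kermxP KA0 : (K :&: kermx A <= kermx A)%MS by apply: capmxSr.
  have /sub_kermxP : (K :&: kermx A <= K)%MS by apply: capmxSl.
  by rewrite mulmxDr KA0 add0r => ->; rewrite row_mx0.
have rank_row : \rank (row_mx A B) + \rank (A^T :&: B^T)%MS = (\rank A + \rank B)%N.
  by have := mxrank_sum_cap A^T B^T; rewrite addsmxE -tr_row_mx !mxrank_tr.
have := mxrank_mul_ker K A; have := mxrankS KA_sub; have := mxrankS KkerA_sub.
rewrite /K !mxrank_ker; have := rank_leq_row (row_mx A B); have := rank_leq_row (A + B).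
lia.
Qed.

Lemma mxrank_addmx_sub p q (A B : 'M[F]_(p, q)) (U U' : 'M[F]_p) (W W' : 'M[F]_q) :
  (A <= W)%MS -> (A^T <= U)%MS -> (B <= W')%MS -> (B^T <= U')%MS ->
  (\rank A + \rank B + \rank (U + U')%MS + \rank (W + W')%MS
   <= \rank (A + B)%R + \rank U + \rank U' + \rank W + \rank W')%N.
Proof.
move=> AW AU BW BU.
have := mxrank_addmx_caps A B; have := mxrankS (capmxS AW BW).
have := mxrankS (capmxS AU BU); have := mxrank_sum_cap U U'; have := mxrank_sum_cap W W'.
lia.
Qed.

Lemma mxrank_sum_caps (J : finType) p q (Q : {set J}) (v : J -> 'M[F]_(p, q))
    (U : J -> 'M[F]_p) (W : J -> 'M[F]_q) :
  {in Q, forall j, (v j <= W j)%MS /\ ((v j)^T <= U j)%MS} ->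
  (\sum_(j in Q) \rank (v j) + \rank (\sum_(j in Q) U j)%MS + \rank (\sum_(j in Q) W j)%MS
   <= \rank (\sum_(j in Q) v j)%R + \sum_(j in Q) \rank (U j) + \sum_(j in Q) \rank (W j))%N.
Proof.
elim/setU1_ind: Q => [|j Q jQ IH] vUW; first by rewrite !big_set0 !mxrank0.
have vUWQ : {in Q, forall k, (v k <= W k)%MS /\ ((v k)^T <= U k)%MS}.
  by move=> k kQ; apply: vUW; rewrite !inE kQ orbT.
have [vW vU] := vUW j (setU11 j Q).
have sumW : ((\sum_(k in Q) v k)%R <= \sum_(k in Q) W k)%MS.
  by apply: summx_sub_sums => k /vUWQ[].
have sumU : ((\sum_(k in Q) v k)%R^T <= \sum_(k in Q) U k)%MS.
  by rewrite raddf_sum; apply: summx_sub_sums => k /vUWQ[].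
have := mxrank_addmx_sub vW vU sumW sumU; have := IH vUWQ.
(* [big_setU1] would yield another, convertible instance of [+], a new atom for [lia]. *)
have -> : (\sum_(k in j |: Q) v k)%R = v j + \sum_(k in Q) v k by rewrite big_setU1.
rewrite !big_setU1 //=; lia.
Qed.

End RankInequalities.

Lemma dim_addv_line (F : fieldType) (vT : vectType F) (v : vT) (U : {vspace vT}) :
  \dim (<[v]> + U) = (\dim U + (v \notin U))%N.
Proof.
have [vU | vNU] := boolP (v \in U).
  by rewrite addn0; congr (\dim _); apply/addv_idPr; rewrite -memvE.
have [leU eqU] := dimv_leqif_eq (addvSr <[v]> U).
have : \dim U != \dim (<[v]> + U).
  by rewrite eqU; apply: contra vNU => /eqP ->; rewrite memvE addvSl.
have := dimv_sum_cap <[v]> U; rewrite dim_vline /=; case: (v != 0); lia.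
Qed.

Section FamilySpan.
Variables (F : fieldType) (vT : vectType F) (I : finType) (f : I -> vT).
Implicit Types (S T C : {set I}) (P Q : {set {set I}}).

Definition fspan (S : {set I}) := <<[seq f a | a in S]>>%VS.
Definition frank (S : {set I}) := \dim (fspan S).

Lemma mem_fspan S a : a \in S -> f a \in fspan S.
Proof. by move=> aS; apply/memv_span/image_f. Qed.

Lemma fspan_ind (R : vT -> Prop) S :
  R 0 -> (forall v w, R v -> R w -> R (v + w)) -> (forall k v, R v -> R (k *: v)) ->
  (forall a, a \in S -> R (f a)) -> forall v, v \in fspan S -> R v.
Proof.
move=> R0 RD RZ Rf v /coord_span ->; apply: big_ind => // i _; apply: RZ.
have /imageP[a aS ->] : (image_tuple f S)`_i \in [seq f a | a in S] by rewrite -tnth_nth mem_tnth.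
exact: Rf.
Qed.

Lemma fspan_subv S (U : {vspace vT}) : (forall a, a \in S -> f a \in U) -> (fspan S <= U)%VS.
Proof. by move=> fU; apply/span_subvP => _ /imageP[a aS ->]; apply: fU. Qed.

Lemma fspanS S T : S \subset T -> (fspan S <= fspan T)%VS.
Proof. by move=> /subsetP ST; apply: fspan_subv => a /ST; apply: mem_fspan. Qed.

Lemma fspan0 : fspan set0 = 0%VS.
Proof. by apply/eqP; rewrite -subv0; apply: fspan_subv => a; rewrite inE. Qed.

Lemma fspanU S T : fspan (S :|: T) = (fspan S + fspan T)%VS.
Proof.
apply/subv_anti/andP; split; last by rewrite subv_add !fspanS ?subsetUl ?subsetUr.
apply: fspan_subv => a; rewrite inE => /orP[] /mem_fspan.
  exact/subvP/addvSl.
exact/subvP/addvSr.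
Qed.

Lemma fspan_set1 a : fspan [set a] = <[f a]>%VS.
Proof.
apply/subv_anti/andP; split; last by rewrite -memvE mem_fspan ?set11.
by apply: fspan_subv => b /set1P ->; apply: memv_line.
Qed.

Lemma fspanU1 a S : fspan (a |: S) = (<[f a]> + fspan S)%VS.
Proof. by rewrite fspanU fspan_set1. Qed.

Lemma fspan_cover P : fspan (cover P) = (\sum_(B in P) fspan B)%VS.
Proof.
apply/subv_anti/andP; split.
  apply: fspan_subv => a /bigcupP[B BP aB].
  exact: subvP (sumv_sup B BP (subvv _)) _ (mem_fspan aB).
by apply/subv_sumP => B BP; apply: fspanS; apply: bigcup_sup.
Qed.


Lemma frank0 : frank set0 = 0%N.
Proof. by rewrite /frank fspan0 dimv0. Qed.

Lemma frank_set1 a : frank [set a] = (f a != 0).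
Proof. by rewrite /frank fspan_set1 dim_vline. Qed.

Lemma frankS S T : S \subset T -> (frank S <= frank T)%N.
Proof. by move/fspanS/dimvS. Qed.

Lemma frankU S T : (frank (S :|: T) <= frank S + frank T)%N.
Proof. by rewrite /frank fspanU; have := dimv_sum_cap (fspan S) (fspan T); lia. Qed.

Lemma frankU1 a S : frank (a |: S) = (frank S + (f a \notin fspan S))%N.
Proof. by rewrite /frank fspanU1 dim_addv_line. Qed.

Lemma frank_le_card S : (frank S <= #|S|)%N.
Proof. by rewrite -(size_image f S); apply: dim_span. Qed.

Lemma frank_gt0 S a : a \in S -> f a != 0 -> (0 < frank S)%N.
Proof.
move=> aS fa0; rewrite lt0n dimv_eq0 -subv0; apply: contra fa0.
by move/subvP/(_ _ (mem_fspan aS)); rewrite memv0.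
Qed.

Lemma frank_eq1 S c : c != 0 -> S != set0 -> {in S, forall a, f a = c} -> frank S = 1%N.
Proof.
move=> c0 /set0Pn[a aS] fc; suff eqS : fspan S = <[c]>%VS by rewrite /frank eqS dim_vline c0.
apply/subv_anti/andP; split; first by apply: fspan_subv => b /fc ->; apply: memv_line.
by rewrite -memvE -(fc a aS) mem_fspan.
Qed.

Lemma frank_le1_line S a b :
  (frank S <= 1)%N -> a \in S -> b \in S -> f a != 0 -> f b \in <[f a]>%VS.
Proof.
move=> le1 aS bS fa0; have sub : (<[f a]> <= fspan S)%VS by rewrite -memvE mem_fspan.
have /eqP -> : (<[f a]> == fspan S)%VS.
  rewrite -(dimv_leqif_eq sub).2 dim_vline fa0.
  by have := frank_gt0 aS fa0; rewrite /frank in le1 *; lia.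
exact: mem_fspan.
Qed.

Lemma frank_cover P : (frank (cover P) <= \sum_(B in P) frank B)%N.
Proof. by rewrite /frank fspan_cover; apply: dimv_sum_leqif. Qed.

Lemma frank_cover_sub P Q : frank (cover P) = (\sum_(B in P) frank B)%N -> Q \subset P ->
  frank (cover Q) = (\sum_(B in Q) frank B)%N.
Proof.
move=> addP QP; apply/eqP; rewrite eqn_leq frank_cover /=.
have splitP : P = Q :|: (P :\: Q) by rewrite -{1}(setID P Q) (setIidPr QP).
have coverP : cover P = cover Q :|: cover (P :\: Q) by rewrite {1}splitP /cover bigcup_setU.
have sumP : (\sum_(B in P) frank B = \sum_(B in Q) frank B + \sum_(B in P :\: Q) frank B)%N.
  by rewrite (big_setID Q) /= (setIidPr QP).
rewrite -(leq_add2r (\sum_(B in P :\: Q) frank B)) -sumP -addP coverP.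
exact: leq_trans (frankU _ _) (leq_add (leqnn _) (frank_cover _)).
Qed.

Lemma fspan_cover_capD P B : frank (cover P) = (\sum_(C in P) frank C)%N -> B \in P ->
  (fspan B :&: fspan (cover P :\: B) = 0)%VS.
Proof.
move=> addP BP; apply/eqP; rewrite -dimv_eq0 -leqn0.
have sub : cover P :\: B \subset cover (P :\ B).
  apply/subsetP => a /setDP[/bigcupP[C CP aC] aNB]; apply/bigcupP; exists C => //.
  by rewrite !inE CP andbT; apply: contraNneq aNB => <-.
have coverP : B :|: (cover P :\: B) = cover P.
  by rewrite -[in RHS](setID (cover P) B) (setIidPr (bigcup_sup B BP)).
have capE : (frank (cover P) + \dim (fspan B :&: fspan (cover P :\: B))
              = frank B + frank (cover P :\: B))%N.
  by rewrite /frank -[RHS]dimv_sum_cap -fspanU coverP.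
rewrite -(leq_add2l (frank (cover P))) addn0 capE addP (big_setD1 B BP) leq_add2l.
exact: leq_trans (frankS sub) (frank_cover _).
Qed.

Definition fdecomposable S := [exists S1 : {set I},
  [&& S1 \proper S, S1 != set0 & (fspan S1 :&: fspan (S :\: S1) == 0)%VS]].

Definition fconnected S := (S != set0) && ~~ fdecomposable S.

Lemma frank_lt_card_relation (c : I -> F) a0 :
  c a0 != 0 -> \sum_a c a *: f a = 0 -> (frank [set: I] < #|[set: I]|)%N.
Proof.
move=> ca0; rewrite (bigD1 a0) //= => /eqP; rewrite addr_eq0 => /eqP rel.
have fa0 : f a0 \in fspan ([set: I] :\ a0).
  rewrite -[f a0]scale1r -(mulVf ca0) -scalerA rel memvZ // memvN.
  by apply: memv_suml => a aNa0; rewrite memvZ // mem_fspan // !inE aNa0.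
rewrite -(setD1K (in_setT a0)) frankU1 fa0 addn0 cardsU1 !inE eqxx /=.
by rewrite add1n ltnS frank_le_card.
Qed.

Lemma fconnected_dependent_sub C : (frank C < #|C|)%N ->
  exists2 S : {set I}, S \subset C & fconnected S && (frank S < #|S|)%N.
Proof.
have [k] := ubnP #|C|; elim: k C => // k IH C ltCk ltC.
have [/existsP[C1 /and3P[ltC1 C10 /eqP cap0]] | Cind] := boolP (fdecomposable C); last first.
  exists C => //; rewrite /fconnected Cind ltC !andbT.
  by apply/negP => /eqP C0; rewrite C0 cards0 ltn0 in ltC.
have C1C : C1 \subset C := proper_sub ltC1.
have rankC : frank C = (frank C1 + frank (C :\: C1))%N.
  by rewrite /frank -[in LHS](setID C C1) (setIidPr C1C) fspanU dimv_disjoint_sum.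
have cardC : #|C| = (#|C1| + #|C :\: C1|)%N by rewrite -(cardsID C1 C) (setIidPr C1C).
have C1gt0 : (0 < #|C1|)%N by rewrite card_gt0.
have [lt1 | ge1] := ltnP (frank C1) #|C1|.
  have [|S SC1 HS] := IH C1 _ lt1; first by have := proper_card ltC1; lia.
  by exists S => //; apply: subset_trans SC1 C1C.
have ltD : (frank (C :\: C1) < #|C :\: C1|)%N by lia.
have [|S SC2 HS] := IH (C :\: C1) _ ltD; first by lia.
by exists S => //; apply: subset_trans SC2 (subsetDl C C1).
Qed.

End FamilySpan.

Lemma frank_preimset (F : fieldType) (vT : vectType F) (I J : finType) (f : I -> vT)
    (h : J -> I) (S : {set I}) :
  (frank (f \o h) (h @^-1: S) <= frank f S)%N.
Proof. by apply/dimvS/fspan_subv => b; rewrite inE; apply: mem_fspan. Qed.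

Section FamilyExt.
Variables (F : fieldType) (vT : vectType F) (I : finType) (f g : I -> vT).
Hypothesis fg : f =1 g.

Lemma eq_fspan S : fspan f S = fspan g S.
Proof. by rewrite /fspan; congr <<_>>%VS; apply: eq_map. Qed.

Lemma eq_frank S : frank f S = frank g S.
Proof. by rewrite /frank eq_fspan. Qed.

Lemma eq_fconnected S : fconnected f S = fconnected g S.
Proof. by rewrite /fconnected /fdecomposable; under eq_existsb => S1 do rewrite !eq_fspan. Qed.

End FamilyExt.

Section FamilyImage.
Variables (F : fieldType) (vT wT : vectType F) (I : finType) (f : I -> vT).
Variable g : {linear vT -> wT}.
Hypothesis g_inj : injective g.

Let lker_g : lker (linfun g) == 0%VS.
Proof. by apply/lker0P => v w; rewrite !lfunE; apply: g_inj. Qed.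

Lemma fspan_comp S : fspan (g \o f) S = (linfun g @: fspan f S)%VS.
Proof.
rewrite /fspan limg_span -map_comp; congr <<_>>%VS.
by apply: eq_map => a /=; rewrite lfunE.
Qed.

Lemma frank_comp S : frank (g \o f) S = frank f S.
Proof. by rewrite /frank fspan_comp limg_dim_eq // (eqP lker_g) capv0. Qed.

Lemma fconnected_comp S : fconnected (g \o f) S = fconnected f S.
Proof.
rewrite /fconnected /fdecomposable; under eq_existsb => S1 do
  rewrite !fspan_comp -lker0_img_cap // -(limg0 (linfun g)) eq_limg_ker0 //.
done.
Qed.

End FamilyImage.

Lemma mxrank_addsmx_rV (F : fieldType) m n (v : 'rV[F]_n) (X : 'M[F]_(m, n)) :
  \rank (<<v>> + X)%MS = (\rank X + ~~ (v <= X)%MS)%N.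
Proof.
have [vX | vNX] := boolP (v <= X)%MS.
  by rewrite addn0; apply/eqmx_rank; rewrite addsmx_sub genmxE vX submx_refl addsmxSr.
have [_ eqX] := mxrank_leqif_sup (addsmxSr <<v>>%MS X).
have : \rank X != \rank (<<v>> + X)%MS by rewrite eqX addsmx_sub genmxE (negbTE vNX).
have [+ _] := mxrank_adds_leqif <<v>>%MS X; have := mxrankS (addsmxSr <<v>>%MS X).
by rewrite mxrank_gen rank_rV; case: (v != 0); lia.
Qed.

Section RowFamily.
Variables (F : fieldType) (I : finType) (p : nat) (u : I -> 'rV[F]_p).
Implicit Types S : {set I}.

Definition span_mx S := (\sum_(a in S) <<u a>>)%MS.

Lemma sub_span_mx S a : a \in S -> (u a <= span_mx S)%MS.
Proof. by move=> aS; rewrite -(genmxE (u a)); apply: sumsmx_sup aS _. Qed.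

Lemma span_mx_sub S m (X : 'M[F]_(m, p)) :
  (forall a, a \in S -> (u a <= X)%MS) -> (span_mx S <= X)%MS.
Proof. by move=> uX; apply/sumsmx_subP => a /uX; rewrite genmxE. Qed.

Lemma mem_fspan_rV S v : (v \in fspan u S) = (v <= span_mx S)%MS.
Proof.
apply/idP/idP.
  apply: (@fspan_ind _ _ _ u (fun v => v <= span_mx S)%MS) => //.
  - exact: sub0mx.
  - by move=> ? ?; apply: addmx_sub.
  - by move=> ? ?; apply: scalemx_sub.
  - exact: sub_span_mx.
case/sub_sumsmxP=> D ->; apply: memv_suml => a aS.
have /sub_rVP[k ->] : (D a *m <<u a>> <= u a)%MS by rewrite (submx_trans (submxMl _ _)) ?genmxE.
by rewrite memvZ // mem_fspan.
Qed.

Lemma frank_rV S : frank u S = \rank (span_mx S).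
Proof.
elim/setU1_ind: S => [|a S aS IH]; first by rewrite frank0 /span_mx big_set0 mxrank0.
by rewrite frankU1 IH mem_fspan_rV /span_mx big_setU1 //= mxrank_addsmx_rV.
Qed.

End RowFamily.

Section Dyads.
Variables (F : fieldType) (I : finType) (p q : nat).
Variables (u : I -> 'rV[F]_p) (w : I -> 'rV[F]_q).
Implicit Types (S B : {set I}) (P Q : {set {set I}}).

Definition dyad a : 'M[F]_(p, q) := (u a)^T *m w a.

Lemma tr_col_fspan_dyad S t k : t \in fspan dyad S -> (col k t)^T \in fspan u S.
Proof.
apply: (@fspan_ind _ _ _ dyad (fun t => (col k t)^T \in fspan u S)).
- by rewrite linear0 linear0 mem0v.
- by move=> t1 t2; rewrite !linearD /=; apply: memvD.
- by move=> c t1; rewrite !linearZ /=; apply: memvZ.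
move=> a aS; have -> : (col k (dyad a))^T = w a 0 k *: u a.
  by apply/rowP => i; rewrite !mxE big_ord1 !mxE mulrC.
by rewrite memvZ // mem_fspan.
Qed.

Lemma fconnected_dyad S : fconnected dyad S -> fconnected u S.
Proof.
case/andP=> S0 /negP Sind; rewrite /fconnected S0 /=.
apply/negP => /existsP[S1 /and3P[ltS1 S10 /eqP cap0]].
apply: Sind; apply/existsP; exists S1; rewrite ltS1 S10 -subv0 /=.
apply/subvP => t /memv_capP[t1 t2]; rewrite memv0; apply/eqP/matrixP => i k.
have : (col k t)^T \in (fspan u S1 :&: fspan u (S :\: S1))%VS.
  by apply/memv_capP; split; apply: tr_col_fspan_dyad.
by rewrite cap0 memv0 => /eqP/rowP/(_ i); rewrite !mxE.
Qed.

Hypotheses (u_neq0 : forall a, u a != 0) (w_neq0 : forall a, w a != 0).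

Lemma dyad_eqmx a : (dyad a :=: w a)%MS.
Proof. by apply: eqmxMfull; rewrite /row_full mxrank_tr rank_rV u_neq0. Qed.

Lemma tr_dyad_eqmx a : ((dyad a)^T :=: u a)%MS.
Proof.
by rewrite trmx_mul trmxK; apply: eqmxMfull; rewrite /row_full mxrank_tr rank_rV w_neq0.
Qed.

Lemma rank_dyad a : \rank (dyad a) = 1%N.
Proof. by rewrite dyad_eqmx rank_rV w_neq0. Qed.

Lemma fspan_dyad_sub B v :
  v \in fspan dyad B -> (v <= span_mx w B)%MS /\ (v^T <= span_mx u B)%MS.
Proof.
apply: (@fspan_ind _ _ _ dyad (fun v => (v <= span_mx w B)%MS /\ (v^T <= span_mx u B)%MS)).
- by rewrite linear0 !sub0mx.
- by move=> v1 v2 [? ?] [? ?]; rewrite linearD; split; apply: addmx_sub.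
- by move=> c v1 [? ?]; rewrite linearZ; split; apply: scalemx_sub.
by move=> a aB; rewrite dyad_eqmx tr_dyad_eqmx !sub_span_mx.
Qed.

Definition dyad_block B := (frank u B + frank w B <= frank dyad B + 1)%N.

Lemma dyad_block_merge e Q (v : {set I} -> 'M[F]_(p, q)) :
  {in Q, forall B, [/\ v B \in fspan dyad B, v B != 0 & dyad_block B]} ->
  dyad e = \sum_(B in Q) v B ->
  (frank u (e |: cover Q) + frank w (e |: cover Q) <= \sum_(B in Q) frank dyad B + 1)%N.
Proof.
move=> vQ de.
have vUW : {in Q, forall B, (v B <= span_mx w B)%MS /\ ((v B)^T <= span_mx u B)%MS}.
  by move=> B /vQ[/fspan_dyad_sub].
have := mxrank_sum_caps vUW; rewrite -de rank_dyad.
have cardQ : (#|Q| <= \sum_(B in Q) \rank (v B))%N.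
  by rewrite -sum1_card; apply: leq_sum => B /vQ[_ vB0 _]; rewrite lt0n mxrank_eq0.
have blocks : (\sum_(B in Q) \rank (span_mx u B) + \sum_(B in Q) \rank (span_mx w B)
               <= \sum_(B in Q) frank dyad B + #|Q|)%N.
  rewrite -big_split -sum1_card -big_split /=; apply: leq_sum => B /vQ[_ _].
  by rewrite /dyad_block (frank_rV u) (frank_rV w).
have subU : (span_mx u (e |: cover Q) <= \sum_(B in Q) span_mx u B)%MS.
  apply: span_mx_sub => a; rewrite !inE => /orP[/eqP-> | /bigcupP[B BQ aB]].
    by rewrite -(tr_dyad_eqmx e) de raddf_sum; apply: summx_sub_sums => B /vUW[].
  exact: sumsmx_sup BQ (sub_span_mx u aB).
have subW : (span_mx w (e |: cover Q) <= \sum_(B in Q) span_mx w B)%MS.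
  apply: span_mx_sub => a; rewrite !inE => /orP[/eqP-> | /bigcupP[B BQ aB]].
    by rewrite -(dyad_eqmx e) de; apply: summx_sub_sums => B /vUW[].
  exact: sumsmx_sup BQ (sub_span_mx w aB).
have := mxrankS subU; have := mxrankS subW; rewrite (frank_rV u) (frank_rV w); lia.
Qed.

(* The rank condition says that the spans of the blocks form a direct sum. *)
Definition dyad_partition P S := [/\ cover P = S, set0 \notin P,
  frank dyad S = (\sum_(B in P) frank dyad B)%N & {in P, forall B, dyad_block B}].

Lemma dyad_partition0 : dyad_partition set0 set0.
Proof. by split=> [|||B]; rewrite /cover ?big_set0 ?frank0 ?inE. Qed.

Lemma dyad_partition_free e P S : dyad_partition P S -> dyad e \notin fspan dyad S ->
  dyad_partition ([set e] |: P) (e |: S).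
Proof.
move=> [coverP P0 addP blocksP] eNS.
have eNP : [set e] \notin P.
  apply: contra eNS => eP; apply: mem_fspan; rewrite -coverP.
  by apply/bigcupP; exists [set e]; rewrite ?set11.
have [ru [rw rd]] : (frank u [set e] = 1 /\ frank w [set e] = 1 /\ frank dyad [set e] = 1)%N.
  by rewrite !frank_set1 u_neq0 w_neq0 -mxrank_eq0 rank_dyad.
split.
- by rewrite /cover bigcup_setU big_set1 -/(cover P) coverP.
- by rewrite !inE negb_or P0 andbT; apply/eqP => /setP/(_ e); rewrite !inE eqxx.
- by rewrite frankU1 (negbTE eNS) big_setU1 //= addP rd addnC.
by move=> B /setU1P[-> | /blocksP //]; rewrite /dyad_block ru rw rd.
Qed.

Lemma dyad_partition_merge e P S : dyad_partition P S -> e \notin S ->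
  dyad e \in fspan dyad S -> exists P', dyad_partition P' (e |: S).
Proof.
(* dyad e splits into components v B in the blocks B; merging e with the
   blocks where v B != 0 keeps the sum direct, and the merged block satisfies
   the bound by the Sylvester-type inequality [mxrank_sum_caps]. *)
move=> [coverP P0 addP blocksP] eNS eS.
have [v vP de] : exists2 v : {set I} -> 'M[F]_(p, q),
    forall B, B \in P -> v B \in fspan dyad B & dyad e = \sum_(B in P) v B.
  by apply/memv_sumP; rewrite -fspan_cover coverP.
pose Q := [set B in P | v B != 0]; pose R := P :\: Q; pose N := e |: cover Q.
have QP : Q \subset P by apply/subsetP => B; rewrite inE => /andP[].
have PQR : P = Q :|: R by rewrite -{1}(setID P Q) (setIidPr QP).
have deQ : dyad e = \sum_(B in Q) v B.
  rewrite de (big_setID Q) /= (setIidPr QP) [X in _ + X]big1 ?addr0 // => B /setDP[BP BNQ].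
  by apply/eqP; apply: contraNT BNQ => vB0; rewrite inE BP vB0.
have eQ : dyad e \in fspan dyad (cover Q).
  by rewrite deQ fspan_cover; apply: memv_sumr => B BQ; apply/vP/(subsetP QP).
have rankN : frank dyad N = (\sum_(B in Q) frank dyad B)%N.
  by rewrite frankU1 eQ addn0 (frank_cover_sub _ QP) // coverP.
have eN : e \in N by rewrite setU11.
have NR : N \notin R.
  by apply: contra eNS => /setDP[NP _]; rewrite -coverP; apply/bigcupP; exists N.
exists (N |: R); split.
- by rewrite /cover bigcup_setU big_set1 /N -setUA -bigcup_setU -PQR -/(cover P) coverP.
- rewrite in_setU1 negb_or eq_sym; apply/andP; split; first by apply/set0Pn; exists e.
  by apply: contra P0 => /setDP[].
- by rewrite frankU1 eS addn0 big_setU1 //= rankN addP (big_setID Q) /= (setIidPr QP).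
move=> B /setU1P[-> | /setDP[BP _]]; last exact: blocksP.
rewrite /dyad_block rankN; apply: dyad_block_merge deQ => C.
by rewrite inE => /andP[CP vC0]; split; [exact: vP | | exact: blocksP].
Qed.

Lemma dyad_partition_exists S : exists P, dyad_partition P S.
Proof.
elim/setU1_ind: S => [|e S eNS [P PS]]; first by exists set0; apply: dyad_partition0.
have [eS | ?] := boolP (dyad e \in fspan dyad S).
  exact: dyad_partition_merge PS eNS eS.
by exists ([set e] |: P); apply: dyad_partition_free.
Qed.

Lemma frank_dyad_connected S :
  fconnected dyad S -> (frank u S + frank w S <= frank dyad S + 1)%N.
Proof.
case/andP=> /set0Pn[a aS] Sind.
have [P [coverP P0 addP blocksP]] := dyad_partition_exists S.
have /bigcupP[B BP aB] : a \in cover P by rewrite coverP.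
have [<- | BNS] := eqVneq B S; first exact: blocksP.
case/negP: Sind; apply/existsP; exists B.
have BS : B \subset S by rewrite -coverP; apply: bigcup_sup.
rewrite properEneq BNS BS /=; apply/andP; split; first by apply: contraNneq P0 => <-.
by rewrite -coverP; apply/eqP/fspan_cover_capD; rewrite ?coverP.
Qed.

End Dyads.

Lemma rV_neq0_entry (F : fieldType) n (v : 'rV[F]_n) : v != 0 -> exists k, v 0 k != 0.
Proof.
move=> v0; apply/existsP; apply: contraR v0 => /existsPn v0.
by apply/eqP/rowP => k; rewrite mxE; apply/eqP/negbNE/v0.
Qed.

Section Tensors.
Variables (F : fieldType) (m : nat) (d : 'I_m -> nat).
Local Notation N := #|{: multi_index d}|.
Implicit Types y z : forall l : 'I_m, 'rV[F]_(d l).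

Definition tensor_row (t : tensor F d) : 'rV[F]_N := \row_r (t (enum_val r) : F).

Fact tensor_row_is_linear : linear tensor_row.
Proof. by move=> c t t'; apply/rowP => r; rewrite !mxE !ffunE. Qed.
HB.instance Definition _ :=
  GRing.isLinear.Build F (tensor F d) 'rV[F]_N _ tensor_row tensor_row_is_linear.

Lemma tensor_row_inj : injective tensor_row.
Proof.
move=> t t' /rowP e; apply/ffunP => i.
by have := e (enum_rank i); rewrite !mxE enum_rankK.
Qed.

(* Rows are indexed by all multi-indices: row i is the fibre of t through i
   along axis j, so rows repeat, which leaves the row space unchanged. *)
Definition flattening (j : 'I_m) (t : tensor F d) : 'M[F]_(N, d j) :=
  \matrix_(r < N, k < d j)
    (t (finfun (dfwith (fun l => (enum_val r : multi_index d) l) k)) : F).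

Fact flattening_is_linear j : linear (flattening j).
Proof. by move=> c t t'; apply/matrixP => r k; rewrite !mxE !ffunE. Qed.
HB.instance Definition _ j :=
  GRing.isLinear.Build F (tensor F d) 'M[F]_(N, d j) _ (flattening j) (flattening_is_linear j).

Lemma flattening_inj j : injective (flattening j).
Proof.
move=> t t' /matrixP e; apply/ffunP => i.
have ii : finfun (dfwith (fun l => i l) (i j)) = i.
  by apply/ffunP => l; rewrite ffunE; case: dfwithP.
by have := e (enum_rank i) (i j); rewrite !mxE enum_rankK ii.
Qed.

Definition ones_at (j : 'I_m) z := dfwith z (const_mx 1 : 'rV[F]_(d j)).

Lemma flattening_ptensor j z :
  flattening j (ptensor z) = (tensor_row (ptensor (ones_at j z)))^T *m z j.
Proof.
apply/matrixP => r k; rewrite !mxE big_ord1 !mxE !ffunE.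
rewrite (bigD1 j) //= [in RHS](bigD1 j) //= ffunE /ones_at !dfwith_in mxE mul1r mulrC.
by congr (_ * _); apply: eq_bigr => l lj; rewrite ffunE !dfwith_out // eq_sym.
Qed.

Lemma ptensor_neq0 z : (forall l, z l != 0) -> ptensor z != 0.
Proof.
move=> z_neq0; have [i zi] : exists i : multi_index d, forall l, z l 0 (i l) != 0.
  have [k zk] : exists k : forall l, 'I_(d l), forall l, z l 0 (k l) != 0.
    by apply: (@fin_all_exists _ (fun l => 'I_(d l)) (fun l k => z l 0 k != 0)) => l;
      apply: rV_neq0_entry.
  by exists (finfun k) => l; rewrite ffunE.
apply/eqP => /ffunP/(_ i); rewrite !ffunE => /eqP; apply/negP; rewrite prodf_seq_neq0.
by apply/allP => l _; apply: zi.
Qed.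

Lemma ptensor_factor_neq0 z : ptensor z != 0 -> forall l, z l != 0.
Proof.
move=> pz0 l; apply: contraNneq pz0 => zl0; apply/eqP/ffunP => i.
by rewrite !ffunE (bigD1 l) //= zl0 mxE mul0r.
Qed.

Lemma ptensor_line y z : (forall j, z j \in <[y j]>%VS) -> ptensor z \in <[ptensor y]>%VS.
Proof.
move=> zy; have [c zc] : exists c : 'I_m -> F, forall j, z j = c j *: y j.
  apply: (@fin_all_exists _ (fun _ => F) (fun j c => z j = c *: y j)) => j.
  exact/vlineP/zy.
apply/vlineP; exists (\prod_j c j); apply/ffunP => i; rewrite !ffunE.
by rewrite (eq_bigr (fun j => c j * y j 0 (i j))) ?big_split // => j _; rewrite zc mxE.
Qed.

Lemma ones_at_neq0 j z : (forall l, z l != 0) -> forall l, ones_at j z l != 0.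
Proof.
move=> z_neq0 l; rewrite /ones_at; case: dfwithP => // {l}.
have [k _] := rV_neq0_entry (z_neq0 j).
by apply/eqP => /rowP/(_ k)/eqP; rewrite !mxE oner_eq0.
Qed.

End Tensors.

Section ProductFamilies.
Variables (F : fieldType) (m : nat) (d : 'I_m -> nat) (I : finType).
Implicit Types (x : I -> forall j : 'I_m, 'rV[F]_(d j)) (S : {set I}).

(* For I = 'I_n, [excess x S] is convertible to [\sum_(j < m) (dimS x S j - 1)]. *)
Definition excess x S := (\sum_(j < m) (frank (fun a => x a j) S - 1))%N.

Lemma fconnected_ones_at x S j :
  (forall a l, x a l != 0) -> fconnected (fun a => ptensor (x a)) S ->
  fconnected (fun a => ptensor (ones_at j (x a))) S /\
  (frank (fun a => ptensor (ones_at j (x a))) S + frank (fun a => x a j) S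
     <= frank (fun a => ptensor (x a)) S + 1)%N.
Proof.
move=> x_neq0 Sconn.
pose u a := tensor_row (ptensor (ones_at j (x a))); pose w a := x a j.
have u_neq0 a : u a != 0.
  rewrite raddf_eq0; last exact: tensor_row_inj.
  by apply/ptensor_neq0/ones_at_neq0; apply: x_neq0.
have dyadE : dyad u w =1 flattening j \o (fun a => ptensor (x a)).
  by move=> a; rewrite /= flattening_ptensor.
have dyad_conn : fconnected (dyad u w) S.
  by rewrite (eq_fconnected dyadE S) fconnected_comp //; apply: flattening_inj.
split.
  rewrite -(fconnected_comp _ (@tensor_row_inj F m d)); exact: fconnected_dyad dyad_conn.
have := frank_dyad_connected u_neq0 (fun a => x_neq0 a j) dyad_conn.
by rewrite (eq_frank dyadE S) !frank_comp //; [apply: flattening_inj | apply: tensor_row_inj].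
Qed.

Lemma excess_ones_at x S j : (forall a l, x a l != 0) -> S != set0 ->
  excess x S = (excess (fun a => ones_at j (x a)) S + (frank (fun a => x a j) S - 1))%N.
Proof.
move=> x_neq0 S0.
have ones_j : frank (fun a => ones_at j (x a) j) S = 1%N.
  have [a _] := set0Pn _ S0.
  apply: (frank_eq1 (c := const_mx 1)) => // [|b _]; last by rewrite /ones_at dfwith_in.
  by have := ones_at_neq0 j (x_neq0 a) j; rewrite /ones_at dfwith_in.
have ones_l l : l != j -> frank (fun a => ones_at j (x a) l) S = frank (fun a => x a l) S.
  by move=> lj; apply: eq_frank => a; rewrite /ones_at dfwith_out // eq_sym.
rewrite /excess (bigD1 j) //= [in RHS](bigD1 j) //= ones_j subnn add0n addnC.
by congr (_ + _)%N; apply: eq_bigr => l /ones_l ->.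
Qed.

Lemma excess_lt_frank_connected x S : (forall a j, x a j != 0) ->
  fconnected (fun a => ptensor (x a)) S -> (excess x S < frank (fun a => ptensor (x a)) S)%N.
Proof.
have [k] := ubnP (excess x S); elim: k x => // k IH x ltk x_neq0 Sconn.
have S0 : S != set0 by case/andP: Sconn.
have [a aS] := set0Pn _ S0.
have [ranks_le1 | /forallPn[j]] := boolP [forall j, frank (fun a => x a j) S <= 1]%N.
  rewrite /excess big1 => [|j _]; first exact: frank_gt0 aS (ptensor_neq0 (x_neq0 a)).
  by apply/eqP; rewrite subn_eq0; apply: (forallP ranks_le1).
rewrite -ltnNge => rank_j.
have [conn1 step] := fconnected_ones_at j x_neq0 Sconn.
have excessE := excess_ones_at j x_neq0 S0.
have ltk1 : (excess (fun a => ones_at j (x a)) S < k)%N by lia.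
have := IH _ ltk1 (fun a => ones_at_neq0 j (x_neq0 a)) conn1; lia.
Qed.

Lemma excess_lt_card_relation x (c : I -> F) a0 : (forall a j, x a j != 0) -> c a0 != 0 ->
  \sum_a c a *: ptensor (x a) = 0 -> exists S, (excess x S + 2 <= #|S|)%N.
Proof.
move=> x_neq0 ca0 rel.
have [S _ /andP[Sconn ltS]] := fconnected_dependent_sub (frank_lt_card_relation ca0 rel).
by exists S; have := excess_lt_frank_connected x_neq0 Sconn; lia.
Qed.

Lemma ptensor_not_proportional x : (forall S, 2 <= #|S| -> #|S| <= excess x S)%N ->
  (forall a j, x a j != 0) -> forall a b, a != b -> forall c c' : F, c != 0 -> c' != 0 ->
  c *: ptensor (x a) != c' *: ptensor (x b).
Proof.
move=> hS x_neq0 a b ab c c' c0 c'0; apply/eqP => E.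
pose k i := if i == a then c else if i == b then - c' else 0.
have ka : k a != 0 by rewrite /k eqxx.
have rel : \sum_i k i *: ptensor (x i) = 0.
  have ba : b != a by rewrite eq_sym.
  rewrite (bigD1 a) //= (bigD1 b) //= /k eqxx (negbTE ba) eqxx E scaleNr addrA subrr add0r.
  by rewrite big1 // => i /andP[/negbTE-> /negbTE->]; rewrite scale0r.
have [S excessS] := excess_lt_card_relation x_neq0 ka rel.
by have := hS S; lia.
Qed.

End ProductFamilies.

Lemma card_preimset_lift n (S : {set 'I_n.+1}) :
  (#|S| <= #|lift ord0 @^-1: S| + (ord0 \in S))%N.
Proof.
rewrite (cardsD1 ord0 S) addnC leq_add2r.
apply: leq_trans (leq_imset_card (lift ord0) _); apply/subset_leq_card/subsetP => i /setD1P[].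
by case: (unliftP ord0 i) => [a -> _ aS | -> /eqP //]; apply: imset_f; rewrite inE.
Qed.

Lemma ptensor_in_span_line (F : fieldType) (m n : nat) (d : 'I_m -> nat)
    (x : 'I_n -> forall j, 'rV[F]_(d j)) (z : forall j, 'rV[F]_(d j)) (c : 'I_n -> F) :
  (forall S : {set 'I_n}, 2 <= #|S| -> #|S| <= excess x S)%N -> (forall a j, x a j != 0) ->
  (forall j, z j != 0) -> ptensor z = \sum_a c a *: ptensor (x a) ->
  exists a, ptensor z \in <[ptensor (x a)]>%VS.
Proof.
(* Adjoin z at index ord0 and use the relation z - sum_a c a x a = 0: the
   resulting S must be {ord0, lift ord0 a} with every frank at most 1. *)
move=> hS x_neq0 z_neq0 zc.
pose X i := if unlift ord0 i is Some a then x a else z.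
have X_neq0 i j : X i j != 0 by rewrite /X; case: unlift.
have X0 : X ord0 = z by rewrite /X unlift_none.
have Xlift (a : 'I_n) : X (lift ord0 a) = x a by rewrite /X liftK.
have [S excessS] : exists S, (excess X S + 2 <= #|S|)%N.
  pose k i := if unlift ord0 i is Some a then c a else -1.
  apply: (excess_lt_card_relation (c := k) (a0 := ord0) X_neq0).
    by rewrite /k unlift_none oppr_eq0 oner_eq0.
  rewrite big_ord_recl /k X0 unlift_none; under eq_bigr do rewrite liftK Xlift.
  by rewrite -zc scaleN1r addNr.
pose S0 : {set 'I_n} := lift ord0 @^-1: S.
have excessS0 : (excess x S0 <= excess X S)%N.
  apply: leq_sum => j _; apply: leq_sub2r.
  rewrite (@eq_frank _ _ _ _ ((fun i => X i j) \o lift ord0)) => [|a]; last by rewrite /= Xlift.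
  exact: frank_preimset.
have cardS : (#|S| <= #|S0| + (ord0 \in S))%N := card_preimset_lift S.
have [ord0S | ord0NS] := boolP (ord0 \in S); last first.
  by rewrite (negbTE ord0NS) addn0 in cardS; have := hS S0; lia.
rewrite ord0S in cardS; have := hS S0 => hS0.
have /card_gt0P[a aS0] : (0 < #|S0|)%N by lia.
have excess0 : excess X S = 0%N by lia.
exists a; apply: ptensor_line => j; rewrite -X0 -(Xlift a).
apply: (@frank_le1_line _ _ _ (fun i => X i j) S) => //.
- by move: excess0; rewrite /excess (bigD1 j) //=; lia.
- by rewrite inE in aS0.
- exact: X_neq0.
Qed.

Theorem corollary7p6 (F : fieldType) (m n : nat) (d : 'I_m -> nat)
  (x : 'I_n -> forall j : 'I_m, 'rV[F]_(d j)) :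
  (2 <= n)%N -> (2 <= m)%N ->
  (forall a : 'I_n, ptensor (x a) != 0) ->
  (forall S : {set 'I_n}, (2 <= #|S|)%N ->
     (#|S| <= \sum_(j < m) (dimS x S j - 1))%N) ->
  (forall t : tensor F d, is_product_tensor t ->
     (in_span (fun a => ptensor (x a)) t <->
      exists (a : 'I_n) (c : F), c != 0 /\ t = c *: ptensor (x a)))
  /\
  (forall a b : 'I_n, a != b ->
     forall c c' : F, c != 0 -> c' != 0 ->
       c *: ptensor (x a) != c' *: ptensor (x b)).
Proof.
move=> _ _ px_neq0 hS.
have x_neq0 a j : x a j != 0 by apply: ptensor_factor_neq0.
split=> [t [pz_neq0 [z tz]] | ]; last exact: ptensor_not_proportional.
subst t; split=> [[c zc] | [a [k [_ ->]]]].
  have [a /vlineP[k zk]] := ptensor_in_span_line hS x_neq0 (ptensor_factor_neq0 pz_neq0) zc.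
  by exists a, k; split=> //; apply: contraNneq pz_neq0 => k0; rewrite zk k0 scale0r.
exists (fun b => if b == a then k else 0).
by rewrite (bigD1 a) //= eqxx big1 ?addr0 // => b /negbTE->; rewrite scale0r.
Qed.
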